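(* Let $D$ be a CAEXT derivation ending in a configuration $C\neq\mathsf{unsat}$. Then in $C$, for all array terms $a$ and propagated terms $t$: (i) if $C$ is obtained by applying a non-conflict rule to a configuration $C'$ and $\mathcal R(a,t)\neq()$ in $C'$, then both $\mathcal R(a,t)$ and its depth $|\mathcal R(a,t)|$ are the same in $C$ as in $C'$; (ii) $\mathcal R(a,t)$ is well defined (its defining recursion terminates); (iii) $|\mathcal R(a,t)|$ is finite; (iv) $\mathcal R(a,t)=()$ if and only if $\pi(a,t)=()$.
   Context: Theory. Many-sorted first-order logic with equality. There is an index sort $\sigma$, an element sort $\tau$, and an array sort $(\sigma\to\tau)$, with function symbols: read $a[i]$, write $a\langle i\triangleleft u\rangle$, and constant array $\langle v\rangle$. The empty theory treats all these symbols (and the array sort) as uninterpreted. $T(A)$ is the set of terms occurring in $A$, $T_{\mathcal A}(A)$ the set of array terms in $A$, and $W(A)=\{a\langle i\triangleleft u\rangle[i]\approx u \mid a\langle i\triangleleft u\rangle\in T(A)\}$. Configurations. A configuration is either $\mathsf{unsat}$ or a triple $\langle A,\mathcal I,\pi\rangle$ where $A$ is a set of formulas (with flat literals), $\mathcal I$ is either $\mathcal I_0=\mathsf{none}$ or an interpretation in the empty theory satisfying $A$, and $\pi$ maps pairs $(a,t)$ ($a$ an array term, $t$ a read term $b[i]$ or a constant array term $\langle v\rangle$) to either the undefined value $()$ or a pair $(r,c)$ with $r$ a formula and $c$ an array term. $\pi_0$ maps every pair to $()$; the initial configuration for $A$ is $\langle A,\mathcal I_0,\pi_0\rangle$. Reasons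 and depth. $\mathcal R(a,t)=()$ if $\pi(a,t)=()$; otherwise $\mathcal R(a,t)=\top$ if $t=a$ or $t=a[i]$ for some $i$; otherwise $\mathcal R(a,t)=\mathcal R(c,t)\wedge r$ where $\pi(a,t)=(r,c)$. Correspondingly $|\mathcal R(a,t)|=0$ if $\pi(a,t)=()$, $=1$ if $t=a$ or $t=a[i]$, and $=1+|\mathcal R(c,t)|$ otherwise, where $\pi(a,t)=(r,c)$. Updated indices $I(a,\langle v\rangle)$: $()$ if $\pi(a,\langle v\rangle)=()$; $\emptyset$ if $a=\langle v\rangle$; $I(b,\langle v\rangle)\cup\{j\}$ if $\pi(a,\langle v\rangle)=(\top,b)$ with $b=a\langle j\triangleleft u\rangle$ or $a=b\langle j\triangleleft u\rangle$; otherwise $I(c,\langle v\rangle)$ where $\pi(a,\langle v\rangle)=(r,c)$. ''$\mathcal I\models\varphi$'' refers to the current $\mathcal I$ (empty theory); such premises require $\mathcal I\ne\mathcal I_0$. ''Reset'' means $(\mathcal I,\pi):=(\mathcal I_0,\pi_0)$. Rules of CAEXT: Interp: if $\mathcal I=\mathcal I_0$ and $\mathcal I'\models A\cup W(A)$ in the empty theory, set $\mathcal I:=\mathcal I'$. Conf: if $A\cup W(A)$ is empty-theory unsatisfiable, derive $\mathsf{unsat}$. InitR: $a[i]\in T(A)$ ⟹ $\pi(a,a[i]):=(\top,a)$. InitW: $s=a\langle i\triangleleft u\rangle\in T(A)$ ⟹ $\pi(s,s[i]):=(\top,s)$. RowD: $\mathcal I\models i\not\approx j$, $\pi(a\langle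 j\triangleleft u\rangle,b[i])\ne()$, $\pi(a,b[i])=()$ ⟹ $\pi(a,b[i]):=(i\not\approx j,a\langle j\triangleleft u\rangle)$. RowU: $\mathcal I\models i\not\approx j$, $a\langle j\triangleleft u\rangle\in T(A)$, $\pi(a,b[i])\ne()$, $\pi(a\langle j\triangleleft u\rangle,b[i])=()$ ⟹ $\pi(a\langle j\triangleleft u\rangle,b[i]):=(i\not\approx j,a)$. EqR: $\mathcal I\models a\approx c$, $a,c\in T_{\mathcal A}(A)$, $a\approx c\in T(A)$, $\pi(a,b[i])\ne()$, $\pi(c,b[i])=()$ ⟹ $\pi(c,b[i]):=(a\approx c,a)$. EqL: symmetric, $\pi(a,b[i]):=(a\approx c,c)$. CongR: $\mathcal I\models i\approx k$, $\pi(a,b[i])\ne()$, $\pi(a,c[k])\ne()$, $\mathcal I\models b[i]\not\approx c[k]$ ⟹ add $\mathcal R(a,b[i])\wedge\mathcal R(a,c[k])\wedge i\approx k\Rightarrow b[i]\approx c[k]$ to $A$, reset. DisEq: $\mathcal I\models a\not\approx c$, $a,c\in T_{\mathcal A}(A)$, $a\approx c\in T(A)$, $k_{\{a,c\}}\notin T(A)$ ⟹ add $a\not\approx c\Rightarrow a[k_{\{a,c\}}]\not\approx c[k_{\{a,c\}}]$ (fresh index constant $k_{\{a,c\}}$), reset. Roc: $\pi(\langle v\rangle,b[i])\ne()$, $\mathcal I\models b[i]\not\approx v$ ⟹ add $\mathcal R(\langle v\rangle,b[i])\Rightarrow b[i]\approx v$, reset. InitC: $\langle v\rangle\in T(A)$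 ⟹ $\pi(\langle v\rangle,\langle v\rangle):=(\top,\langle v\rangle)$. CowD: $\pi(a\langle j\triangleleft u\rangle,\langle v\rangle)\ne()$, $\pi(a,\langle v\rangle)=()$, $\mathcal I\models\exists i{:}\sigma.\bigwedge_{k\in I(a\langle j\triangleleft u\rangle,\langle v\rangle)\cup\{j\}}i\not\approx k$ ⟹ $\pi(a,\langle v\rangle):=(\top,a\langle j\triangleleft u\rangle)$. CowU: $\pi(a,\langle v\rangle)\ne()$, $\pi(a\langle j\triangleleft u\rangle,\langle v\rangle)=()$, $a\langle j\triangleleft u\rangle\in T(A)$, $\mathcal I\models\exists i{:}\sigma.\bigwedge_{k\in I(a,\langle v\rangle)\cup\{j\}}i\not\approx k$ ⟹ $\pi(a\langle j\triangleleft u\rangle,\langle v\rangle):=(\top,a)$. CEqR: $\mathcal I\models a\approx c$, $a,c\in T_{\mathcal A}(A)$, $a\approx c\in T(A)$, $\pi(a,\langle v\rangle)\ne()$, $\pi(c,\langle v\rangle)=()$ ⟹ $\pi(c,\langle v\rangle):=(a\approx c,a)$. CEqL: symmetric, $\pi(a,\langle v\rangle):=(a\approx c,c)$. CongC: $\pi(a,\langle v\rangle)\ne()$, $\pi(a,\langle w\rangle)\ne()$, $\mathcal I\models v\not\approx w$, $\mathcal I\models\exists i{:}\sigma.\bigwedge_{k\in I(a,\langle v\rangle)\cup I(a,\langle w\rangle)}i\not\approx k$ ⟹ add $\mathcal R(a,\langle v\rangle)\wedge\mathcal R(a,\langle w\rangle)\wedge\exists i{:}\sigma.\bigwedge_{k\in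 I(a,\langle v\rangle)\cup I(a,\langle w\rangle)}i\not\approx k\Rightarrow v\approx w$, reset. Conflict rules: CongR, DisEq, Roc, CongC; all other rules are non-conflict rules. A derivation is a sequence of configurations starting from an initial configuration, each obtained from the previous by a rule application. *)

From Stdlib Require Import List.
Import ListNotations.

Inductive sort : Type := SIdx | SElem | SArr.

(** Intrinsically sorted terms.  [Cst s n] are the uninterpreted constants
    of sort [s]; [Sk a c] is the fresh index constant k_{a,c} introduced by
    DisEq; [Rd a i] = a[i]; [Wr a i u] = a<i <| u>; [Cnst v] = <v>. *)
Inductive term : sort -> Type :=
| Cst  (s : sort) (n : nat) : term s
| Sk   (a c : term SArr) : term SIdx
| Rd   (a : term SArr) (i : term SIdx) : term SElem
| Wr   (a : term SArr) (i : term SIdx) (u : term SElem) : term SArr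
| Cnst (v : term SElem) : term SArr.

(** Formulas (ground).  [FExDist ks] is the formula
    exists i:sigma. /\_{k in ks} i != k  used by CowD/CowU/CongC. *)
Inductive formula : Type :=
| FTop
| FBot
| FEq (s : sort) (t u : term s)
| FNot (f : formula)
| FAnd (f g : formula)
| FOr (f g : formula)
| FImp (f g : formula)
| FExDist (ks : list (term SIdx)).

Definition FNeq {s} (t u : term s) : formula := FNot (FEq s t u).

Record interp : Type := {
  dom   : sort -> Type;
  icst  : forall s, nat -> dom s;
  isk   : term SArr -> term SArr -> dom SIdx;
  ird   : dom SArr -> dom SIdx -> dom SElem;
  iwr   : dom SArr -> dom SIdx -> dom SElem -> dom SArr;
  icnst : dom SElem -> dom SArr }.

Fixpoint eval (M : interp) (s : sort) (t : term s) {struct t} : dom M s :=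
  match t in term s return dom M s with
  | Cst s n => icst M s n
  | Sk a c => isk M a c
  | Rd a i => ird M (eval M SArr a) (eval M SIdx i)
  | Wr a i u => iwr M (eval M SArr a) (eval M SIdx i) (eval M SElem u)
  | Cnst v => icnst M (eval M SElem v)
  end.

Fixpoint sat (M : interp) (f : formula) : Prop :=
  match f with
  | FTop => True
  | FBot => False
  | FEq s t u => eval M s t = eval M s u
  | FNot g => ~ sat M g
  | FAnd g h => sat M g /\ sat M h
  | FOr g h => sat M g \/ sat M h
  | FImp g h => sat M g -> sat M h
  | FExDist ks => exists x : dom M SIdx, Forall (fun k => x <> eval M SIdx k) ks
  end.

Definition fset := formula -> Prop.
Definition fadd (A : fset) (f : formula) : fset := fun g => A g \/ g = f.
Definition funion (A B : fset) : fset := fun g => A g \/ B g.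
Definition sat_set (M : interp) (A : fset) : Prop := forall f, A f -> sat M f.

Inductive occ_t {s : sort} (t : term s) : forall s', term s' -> Prop :=
| occ_refl : occ_t t s t
| occ_rd_a a i : occ_t t SArr a -> occ_t t SElem (Rd a i)
| occ_rd_i a i : occ_t t SIdx i -> occ_t t SElem (Rd a i)
| occ_wr_a a i u : occ_t t SArr a -> occ_t t SArr (Wr a i u)
| occ_wr_i a i u : occ_t t SIdx i -> occ_t t SArr (Wr a i u)
| occ_wr_u a i u : occ_t t SElem u -> occ_t t SArr (Wr a i u)
| occ_cnst v : occ_t t SElem v -> occ_t t SArr (Cnst v).

Inductive subf (g : formula) : formula -> Prop :=
| subf_refl : subf g g
| subf_not f : subf g f -> subf g (FNot f)
| subf_and_l f h : subf g f -> subf g (FAnd f h)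
| subf_and_r f h : subf g h -> subf g (FAnd f h)
| subf_or_l f h : subf g f -> subf g (FOr f h)
| subf_or_r f h : subf g h -> subf g (FOr f h)
| subf_imp_l f h : subf g f -> subf g (FImp f h)
| subf_imp_r f h : subf g h -> subf g (FImp f h).

Definition occ_f {s : sort} (t : term s) (f : formula) : Prop :=
  exists g, subf g f /\
    match g with
    | FEq s' u v => occ_t t s' u \/ occ_t t s' v
    | FExDist ks => exists k, In k ks /\ occ_t t SIdx k
    | _ => False
    end.

Definition inT (A : fset) {s : sort} (t : term s) : Prop :=
  exists f, A f /\ occ_f t f.

Definition inTA (A : fset) (a : term SArr) : Prop := inT A a.

Definition atom_in (A : fset) (a c : term SArr) : Prop :=
  exists f, A f /\ subf (FEq SArr a c) f.

Definition WA (A : fset) : fset :=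
  fun f => exists a i u, inT A (Wr a i u) /\ f = FEq SElem (Rd (Wr a i u) i) u.

(** Propagated terms: a read term b[i] or a constant array <v>. *)
Inductive key : Type :=
| KRead (b : term SArr) (i : term SIdx)
| KConst (v : term SElem).

(** [None] is the undefined value (). *)
Definition pimap : Type := term SArr -> key -> option (formula * term SArr).
Definition pi0 : pimap := fun _ _ => None.

Definition upd (pi : pimap) (a : term SArr) (k : key) (v : formula * term SArr)
  (pi' : pimap) : Prop :=
  pi' a k = Some v /\ forall a' k', ~ (a' = a /\ k' = k) -> pi' a' k' = pi a' k'.

Definition is_base (a : term SArr) (k : key) : Prop :=
  match k with
  | KRead b _ => b = a
  | KConst v => a = Cnst v
  end.

(** Values of the reason R(a,t): [RNone] is (), [RTop] is T, and
    [RAnd x r] is x /\ r (the recursion R(c,t) /\ r, taken literally). *)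
Inductive rval : Type :=
| RNone
| RTop
| RAnd (x : rval) (r : formula).

Fixpoint rval_formula (x : rval) : option formula :=
  match x with
  | RNone => None
  | RTop => Some FTop
  | RAnd y r => match rval_formula y with Some f => Some (FAnd f r) | None => None end
  end.

(** [reason pi a t x] : the recursive definition of R(a,t) terminates with
    value [x].  (Exactly the defining recursion, as an inductive graph.) *)
Inductive reason (pi : pimap) : term SArr -> key -> rval -> Prop :=
| rs_none a k : pi a k = None -> reason pi a k RNone
| rs_base a k p : pi a k = Some p -> is_base a k -> reason pi a k RTop
| rs_step a k r c x :
    pi a k = Some (r, c) -> ~ is_base a k -> reason pi c k x ->
    reason pi a k (RAnd x r).

(** [depth pi a t n] : |R(a,t)| is computed (terminates) with value n. *)
Inductive depth (pi : pimap) : term SArr -> key -> nat -> Prop :=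
| dp_none a k : pi a k = None -> depth pi a k 0
| dp_base a k p : pi a k = Some p -> is_base a k -> depth pi a k 1
| dp_step a k r c n :
    pi a k = Some (r, c) -> ~ is_base a k -> depth pi c k n ->
    depth pi a k (S n).

(** Updated indices I(a,<v>): [IUndef] is (), [IEmpty] is the empty set,
    [IAdd x j] is x U {j}. *)
Inductive ival : Type :=
| IUndef
| IEmpty
| IAdd (x : ival) (j : term SIdx).

Fixpoint ival_list (x : ival) : option (list (term SIdx)) :=
  match x with
  | IUndef => None
  | IEmpty => Some nil
  | IAdd y j => match ival_list y with Some l => Some (j :: l) | None => None end
  end.

Inductive upd_idx (pi : pimap) : term SArr -> term SElem -> ival -> Prop :=
| ui_none a v : pi a (KConst v) = None -> upd_idx pi a v IUndef
| ui_empty a v p : pi a (KConst v) = Some p -> a = Cnst v -> upd_idx pi a v IEmpty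
| ui_write a v b j u x :
    pi a (KConst v) = Some (FTop, b) -> a <> Cnst v ->
    (b = Wr a j u \/ a = Wr b j u) ->
    upd_idx pi b v x -> upd_idx pi a v (IAdd x j)
| ui_other a v r c x :
    pi a (KConst v) = Some (r, c) -> a <> Cnst v ->
    ~ (r = FTop /\ exists j u, c = Wr a j u \/ a = Wr c j u) ->
    upd_idx pi c v x -> upd_idx pi a v x.

(** [None] is I_0 = none. *)
Inductive config : Type :=
| Unsat
| Conf (A : fset) (I : option interp) (pi : pimap).

Definition initial (A : fset) : config := Conf A None pi0.

(** "I |= phi" : requires I <> I_0. *)
Definition models (I : option interp) (f : formula) : Prop :=
  match I with Some M => sat M f | None => False end.

Inductive nc_step : config -> config -> Prop :=
| R_Interp A pi M :
    sat_set M (funion A (WA A)) ->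
    nc_step (Conf A None pi) (Conf A (Some M) pi)
| R_Conf A I pi :
    (~ exists M, sat_set M (funion A (WA A))) ->
    nc_step (Conf A I pi) Unsat
| R_InitR A I pi a i pi' :
    inT A (Rd a i) ->
    upd pi a (KRead a i) (FTop, a) pi' ->
    nc_step (Conf A I pi) (Conf A I pi')
| R_InitW A I pi a i u pi' :
    inT A (Wr a i u) ->
    upd pi (Wr a i u) (KRead (Wr a i u) i) (FTop, Wr a i u) pi' ->
    nc_step (Conf A I pi) (Conf A I pi')
| R_RowD A I pi a j u b i pi' :
    models I (FNeq i j) ->
    pi (Wr a j u) (KRead b i) <> None ->
    pi a (KRead b i) = None ->
    upd pi a (KRead b i) (FNeq i j, Wr a j u) pi' ->
    nc_step (Conf A I pi) (Conf A I pi')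
| R_RowU A I pi a j u b i pi' :
    models I (FNeq i j) ->
    inT A (Wr a j u) ->
    pi a (KRead b i) <> None ->
    pi (Wr a j u) (KRead b i) = None ->
    upd pi (Wr a j u) (KRead b i) (FNeq i j, a) pi' ->
    nc_step (Conf A I pi) (Conf A I pi')
| R_EqR A I pi a c b i pi' :
    models I (FEq SArr a c) -> inTA A a -> inTA A c -> atom_in A a c ->
    pi a (KRead b i) <> None ->
    pi c (KRead b i) = None ->
    upd pi c (KRead b i) (FEq SArr a c, a) pi' ->
    nc_step (Conf A I pi) (Conf A I pi')
| R_EqL A I pi a c b i pi' :
    models I (FEq SArr a c) -> inTA A a -> inTA A c -> atom_in A a c ->
    pi c (KRead b i) <> None ->
    pi a (KRead b i) = None ->
    upd pi a (KRead b i) (FEq SArr a c, c) pi' ->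
    nc_step (Conf A I pi) (Conf A I pi')
| R_InitC A I pi v pi' :
    inT A (Cnst v) ->
    upd pi (Cnst v) (KConst v) (FTop, Cnst v) pi' ->
    nc_step (Conf A I pi) (Conf A I pi')
| R_CowD A I pi a j u v x l pi' :
    pi (Wr a j u) (KConst v) <> None ->
    pi a (KConst v) = None ->
    upd_idx pi (Wr a j u) v x -> ival_list x = Some l ->
    models I (FExDist (j :: l)) ->
    upd pi a (KConst v) (FTop, Wr a j u) pi' ->
    nc_step (Conf A I pi) (Conf A I pi')
| R_CowU A I pi a j u v x l pi' :
    pi a (KConst v) <> None ->
    pi (Wr a j u) (KConst v) = None ->
    inT A (Wr a j u) ->
    upd_idx pi a v x -> ival_list x = Some l ->
    models I (FExDist (j :: l)) ->
    upd pi (Wr a j u) (KConst v) (FTop, a) pi' ->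
    nc_step (Conf A I pi) (Conf A I pi')
| R_CEqR A I pi a c v pi' :
    models I (FEq SArr a c) -> inTA A a -> inTA A c -> atom_in A a c ->
    pi a (KConst v) <> None ->
    pi c (KConst v) = None ->
    upd pi c (KConst v) (FEq SArr a c, a) pi' ->
    nc_step (Conf A I pi) (Conf A I pi')
| R_CEqL A I pi a c v pi' :
    models I (FEq SArr a c) -> inTA A a -> inTA A c -> atom_in A a c ->
    pi c (KConst v) <> None ->
    pi a (KConst v) = None ->
    upd pi a (KConst v) (FEq SArr a c, c) pi' ->
    nc_step (Conf A I pi) (Conf A I pi').

Inductive cf_step : config -> config -> Prop :=
| R_CongR A I pi a b i c k x1 x2 f1 f2 :
    models I (FEq SIdx i k) ->
    pi a (KRead b i) <> None ->
    pi a (KRead c k) <> None ->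
    models I (FNeq (Rd b i) (Rd c k)) ->
    reason pi a (KRead b i) x1 -> rval_formula x1 = Some f1 ->
    reason pi a (KRead c k) x2 -> rval_formula x2 = Some f2 ->
    cf_step (Conf A I pi)
      (Conf (fadd A (FImp (FAnd (FAnd f1 f2) (FEq SIdx i k))
                          (FEq SElem (Rd b i) (Rd c k)))) None pi0)
| R_DisEq A I pi a c :
    models I (FNeq a c) -> inTA A a -> inTA A c -> atom_in A a c ->
    ~ inT A (Sk a c) -> ~ inT A (Sk c a) ->
    cf_step (Conf A I pi)
      (Conf (fadd A (FImp (FNeq a c) (FNeq (Rd a (Sk a c)) (Rd c (Sk a c)))))
            None pi0)
| R_Roc A I pi v b i x f :
    pi (Cnst v) (KRead b i) <> None ->
    models I (FNeq (Rd b i) v) ->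
    reason pi (Cnst v) (KRead b i) x -> rval_formula x = Some f ->
    cf_step (Conf A I pi)
      (Conf (fadd A (FImp f (FEq SElem (Rd b i) v))) None pi0)
| R_CongC A I pi a v w x1 x2 l1 l2 y1 y2 f1 f2 :
    pi a (KConst v) <> None ->
    pi a (KConst w) <> None ->
    models I (FNeq v w) ->
    upd_idx pi a v y1 -> ival_list y1 = Some l1 ->
    upd_idx pi a w y2 -> ival_list y2 = Some l2 ->
    models I (FExDist (l1 ++ l2)) ->
    reason pi a (KConst v) x1 -> rval_formula x1 = Some f1 ->
    reason pi a (KConst w) x2 -> rval_formula x2 = Some f2 ->
    cf_step (Conf A I pi)
      (Conf (fadd A (FImp (FAnd (FAnd f1 f2) (FExDist (l1 ++ l2)))
                          (FEq SElem v w))) None pi0).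

Definition step (C C' : config) : Prop := nc_step C C' \/ cf_step C C'.

Inductive derivable (A0 : fset) : config -> Prop :=
| der_init : derivable A0 (initial A0)
| der_step C C' : derivable A0 C -> step C C' -> derivable A0 C'.

From Stdlib Require Import Classical ClassicalEpsilon Arith Lia.

(* Every non-base entry of pi points to a defined entry of strictly smaller
   rank, so the recursions defining R(a,t) and |R(a,t)| terminate.  A
   non-conflict rule either redefines a base entry (InitR, InitW, InitC) or
   defines a fresh entry pointing to an already defined one, which keeps
   this invariant and every chain of pointers that was already there;
   conflict rules reset pi to pi0. *)

Definition pi_wf (p : pimap) : Prop :=
  exists rank : term SArr -> key -> nat,
    forall a k r c, p a k = Some (r, c) -> ~ is_base a k ->
      p c k <> None /\ rank c k < rank a k.

Definition pi_extends (p q : pimap) : Prop :=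
  forall a k, p a k <> None -> q a k = p a k \/ (is_base a k /\ q a k <> None).

Inductive pi_growth (p q : pimap) : Prop :=
| grow_same : q = p -> pi_growth p q
| grow_base a k v : upd p a k v q -> is_base a k -> pi_growth p q
| grow_fresh a k r c :
    upd p a k (r, c) q -> p a k = None -> p c k <> None -> pi_growth p q.

Lemma nc_step_pi_growth A I p A' I' q :
  nc_step (Conf A I p) (Conf A' I' q) -> pi_growth p q.
Proof.
  intros Hs; inversion Hs; subst;
    first [ now apply grow_same
          | eapply grow_fresh; eassumption
          | eapply grow_base; [eassumption | reflexivity] ].
Qed.

Lemma cf_step_reset C A I p : cf_step C (Conf A I p) -> p = pi0.
Proof. now inversion 1. Qed.

Lemma pi_wf0 : pi_wf pi0.
Proof. exists (fun _ _ => 0); discriminate. Qed.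

Lemma pi_wf_upd_base p a k v q : pi_wf p -> upd p a k v q -> is_base a k -> pi_wf q.
Proof.
  intros [rank Hrank] [Hqa Hq] Hb.
  exists rank; intros a' k' r' c' E Hb'.
  destruct (classic (a' = a /\ k' = k)) as [[-> ->]|Hne]; [contradiction|].
  rewrite Hq in E by exact Hne.
  destruct (Hrank _ _ _ _ E Hb') as [Hc Hlt]; split; [|exact Hlt].
  destruct (classic (c' = a /\ k' = k)) as [[-> ->]|Hne'].
  - now rewrite Hqa.
  - now rewrite Hq.
Qed.

(* No old pointer targets the fresh entry (old targets are defined), so only
   the fresh entry needs a new rank, just above that of its target. *)
Lemma pi_wf_upd_fresh p a k r c q :
  pi_wf p -> upd p a k (r, c) q -> p a k = None -> p c k <> None -> pi_wf q.
Proof.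
  intros [rank Hrank] [Hqa Hq] Ha Hc.
  exists (fun a' k' => if excluded_middle_informative (a' = a /\ k' = k)
                  then S (rank c k) else rank a' k').
  intros a' k' r' c' E Hb'.
  destruct (excluded_middle_informative (a' = a /\ k' = k)) as [[-> ->]|Hne].
  - rewrite Hqa in E; injection E as <- <-.
    destruct (excluded_middle_informative (c = a /\ k = k)) as [[-> _]|Hne'];
      [contradiction|].
    split; [now rewrite Hq | lia].
  - rewrite Hq in E by exact Hne.
    destruct (Hrank _ _ _ _ E Hb') as [Hc' Hlt].
    destruct (excluded_middle_informative (c' = a /\ k' = k)) as [[-> ->]|Hne'];
      [contradiction|].
    split; [now rewrite Hq | exact Hlt].
Qed.

Lemma pi_growth_wf p q : pi_wf p -> pi_growth p q -> pi_wf q.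
Proof.
  intros Hp [-> | a k v Hq Hb | a k r c Hq Ha Hc].
  - exact Hp.
  - exact (pi_wf_upd_base _ _ _ _ _ Hp Hq Hb).
  - exact (pi_wf_upd_fresh _ _ _ _ _ _ Hp Hq Ha Hc).
Qed.

Lemma pi_growth_extends p q : pi_growth p q -> pi_extends p q.
Proof.
  intros [-> | a k v [Hqa Hq] Hb | a k r c [Hqa Hq] Ha _] a' k' Hp.
  - now left.
  - destruct (classic (a' = a /\ k' = k)) as [[-> ->]|Hne].
    + right; split; [exact Hb | now rewrite Hqa].
    + left; now apply Hq.
  - left; apply Hq; intros [-> ->]; contradiction.
Qed.

Lemma derivable_pi_wf A0 A I p : derivable A0 (Conf A I p) -> pi_wf p.
Proof.
  remember (Conf A I p) as C eqn:EC; intros HD; revert A I p EC.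
  induction HD as [|C C' HD IH [Hs|Hs]]; intros A I p EC.
  - injection EC as _ _ <-; exact pi_wf0.
  - subst C'; destruct C as [|A1 I1 p1]; [inversion Hs|].
    exact (pi_growth_wf _ _ (IH _ _ _ eq_refl) (nc_step_pi_growth _ _ _ _ _ _ Hs)).
  - subst C'; rewrite (cf_step_reset _ _ _ _ Hs); exact pi_wf0.
Qed.

Lemma reason_none_iff p a k x : reason p a k x -> (x = RNone <-> p a k = None).
Proof. destruct 1; split; congruence. Qed.

Lemma reason_extends p q : pi_wf p -> pi_extends p q ->
  forall a k x, reason p a k x -> p a k <> None -> reason q a k x.
Proof.
  intros [rank Hrank] Hpq a k x H; induction H as [a k E|a k v E Hb|a k r c x E Hb H IH];
    intros Hn; [contradiction| |].
  - destruct (Hpq a k Hn) as [Eq|[_ Eq]].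
    + eapply rs_base; [rewrite Eq; exact E | exact Hb].
    + destruct (q a k) eqn:Eq'; [eapply rs_base; eauto | contradiction].
  - destruct (Hpq a k Hn) as [Eq|[Hb' _]]; [|contradiction].
    eapply rs_step; [rewrite Eq; exact E | exact Hb |].
    exact (IH (proj1 (Hrank _ _ _ _ E Hb))).
Qed.

Lemma depth_extends p q : pi_wf p -> pi_extends p q ->
  forall a k n, depth p a k n -> p a k <> None -> depth q a k n.
Proof.
  intros [rank Hrank] Hpq a k n H; induction H as [a k E|a k v E Hb|a k r c n E Hb H IH];
    intros Hn; [contradiction| |].
  - destruct (Hpq a k Hn) as [Eq|[_ Eq]].
    + eapply dp_base; [rewrite Eq; exact E | exact Hb].
    + destruct (q a k) eqn:Eq'; [eapply dp_base; eauto | contradiction].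
  - destruct (Hpq a k Hn) as [Eq|[Hb' _]]; [|contradiction].
    eapply dp_step; [rewrite Eq; exact E | exact Hb |].
    exact (IH (proj1 (Hrank _ _ _ _ E Hb))).
Qed.

Lemma reason_total p : pi_wf p -> forall a k, exists x, reason p a k x.
Proof.
  intros [rank Hrank] a k.
  remember (rank a k) as m eqn:Em; revert a Em.
  induction m as [m IH] using lt_wf_ind; intros a ->.
  destruct (p a k) as [[r c]|] eqn:E; [|exists RNone; now apply rs_none].
  destruct (classic (is_base a k)) as [Hb|Hb]; [exists RTop; eapply rs_base; eauto|].
  destruct (IH _ (proj2 (Hrank _ _ _ _ E Hb)) c eq_refl) as [x Hx].
  exists (RAnd x r); eapply rs_step; eauto.
Qed.

Lemma depth_total p : pi_wf p -> forall a k, exists n, depth p a k n.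
Proof.
  intros [rank Hrank] a k.
  remember (rank a k) as m eqn:Em; revert a Em.
  induction m as [m IH] using lt_wf_ind; intros a ->.
  destruct (p a k) as [[r c]|] eqn:E; [|exists 0; now apply dp_none].
  destruct (classic (is_base a k)) as [Hb|Hb]; [exists 1; eapply dp_base; eauto|].
  destruct (IH _ (proj2 (Hrank _ _ _ _ E Hb)) c eq_refl) as [n Hn].
  exists (S n); eapply dp_step; eauto.
Qed.

Theorem mainTheorem3 :
  forall (A0 : fset) (A : fset) (I : option interp) (pi : pimap),
    derivable A0 (Conf A I pi) ->
    (* (i) stability under non-conflict rules *)
    (forall A' I' pi',
        derivable A0 (Conf A' I' pi') ->
        nc_step (Conf A' I' pi') (Conf A I pi) ->
        forall (a : term SArr) (t : key) (x : rval) (n : nat),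
          reason pi' a t x -> x <> RNone -> depth pi' a t n ->
          reason pi a t x /\ depth pi a t n)
    (* (ii) R(a,t) is well defined *)
    /\ (forall (a : term SArr) (t : key), exists x, reason pi a t x)
    (* (iii) |R(a,t)| is finite *)
    /\ (forall (a : term SArr) (t : key), exists n, depth pi a t n)
    (* (iv) R(a,t) = () iff pi(a,t) = () *)
    /\ (forall (a : term SArr) (t : key) (x : rval),
          reason pi a t x -> (x = RNone <-> pi a t = None)).
Proof.
  intros A0 A I pi HD.
  pose proof (derivable_pi_wf _ _ _ _ HD) as Hwf.
  split; [|split; [|split]].
  - intros A' I' pi' HD' Hs a t x n Hx Hne Hd.
    pose proof (derivable_pi_wf _ _ _ _ HD') as Hwf'.
    pose proof (pi_growth_extends _ _ (nc_step_pi_growth _ _ _ _ _ _ Hs)) as Hext.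
    assert (Hdef : pi' a t <> None)
      by (intros E; exact (Hne (proj2 (reason_none_iff _ _ _ _ Hx) E))).
    split; [eapply reason_extends | eapply depth_extends]; eauto.
  - exact (reason_total _ Hwf).
  - exact (depth_total _ Hwf).
  - exact (reason_none_iff pi).
Qed.
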